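(* Let $G$ be a complete split graph with partition $(K,S)$, $K\neq\emptyset$, whose vertices are each colored $A$, $B$ or $C$. If every vertex of $K$ has color $A$ (resp. $B$), then the Normal Partizan Domination game on $G$ has the same value as the game on the star whose leaves are the vertices of $S$ (with their colors) and whose center has color $A$ (resp. $B$). Otherwise, the game on $G$ has the same value as the game on that star with center colored $C$.
   Context: A complete split graph is a graph $G$ whose vertex set has a partition $(K,S)$ such that $K$ induces a clique, $S$ is an independent set, and every vertex of $K$ is adjacent to every vertex of $S$. Normal Partizan Domination game: a finite graph has each vertex colored $A$, $B$ or $C$. Alice and Bob alternately select a vertex; Alice may only select vertices colored $A$ or $C$, Bob only vertices colored $B$ or $C$. A vertex $u$ dominates $v$ if $u=v$ or $uv$ is an edge. A vertex may be selected only if it is playable, i.e. it dominates at least one vertex not dominated by the previously selected vertices; the game ends when the selected vertices form a dominating set. Under normal play the player unable to move loses. The game is regarded as a partizan combinatorial game with Alice as Left and Bob as Right, and its value is its value in Conway's combinatorial game theory ($G=H$ iff $G+(-H)$ is a second-player win). *)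

From mathcomp Require Import all_boot.
Set Implicit Arguments. Unset Strict Implicit. Unset Printing Implicit Defensive.

Record Game := MkGame {
  gpos : Type;
  gstart : gpos;
  lmove : gpos -> gpos -> Prop;
  rmove : gpos -> gpos -> Prop
}.

(* Outcomes under normal play (the player unable to move loses).
   LWin p  : Left, moving first from p, has a winning strategy.
   RLose p : Right, moving first from p, loses (Left wins as second player). *)
Inductive LWin (G : Game) : gpos G -> Prop :=
  | LWin_intro p p' : lmove p p' -> RLose p' -> LWin p
with RLose (G : Game) : gpos G -> Prop :=
  | RLose_intro p : (forall p', rmove p p' -> LWin p') -> RLose p.

Inductive RWin (G : Game) : gpos G -> Prop :=
  | RWin_intro p p' : rmove p p' -> LLose p' -> RWin p
with LLose (G : Game) : gpos G -> Prop :=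
  | LLose_intro p : (forall p', lmove p p' -> RWin p') -> LLose p.

Definition second_player_win (G : Game) : Prop :=
  LLose (gstart G) /\ RLose (gstart G).

Definition game_sum (G H : Game) : Game :=
  {| gpos := (gpos G * gpos H)%type;
     gstart := (gstart G, gstart H);
     lmove := fun p q => (lmove p.1 q.1 /\ q.2 = p.2) \/ (q.1 = p.1 /\ lmove p.2 q.2);
     rmove := fun p q => (rmove p.1 q.1 /\ q.2 = p.2) \/ (q.1 = p.1 /\ rmove p.2 q.2) |}.

Definition game_neg (G : Game) : Game :=
  {| gpos := gpos G; gstart := gstart G; lmove := @rmove G; rmove := @lmove G |}.

Definition game_eq (G H : Game) : Prop := second_player_win (game_sum G (game_neg H)).

Inductive color := cA | cB | cC.

Definition alice_can (c : color) : bool := match c with cA | cC => true | cB => false end.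
Definition bob_can (c : color) : bool := match c with cB | cC => true | cA => false end.

Section Domination.
Variables (T : finType) (e : rel T).

Definition dominates (u v : T) : bool := (u == v) || e u v.

Definition playable (S : {set T}) (v : T) : bool :=
  [exists w, dominates v w && ~~ [exists u in S, dominates u w]].
End Domination.

Definition dom_game (T : finType) (e : rel T) (col : T -> color) : Game :=
  {| gpos := {set T};
     gstart := set0;
     lmove := fun S S' => exists v, [/\ alice_can (col v), playable e S v & S' = v |: S];
     rmove := fun S S' => exists v, [/\ bob_can (col v), playable e S v & S' = v |: S] |}.

Definition complete_split (T : finType) (e : rel T) (K : {set T}) : Prop :=
  forall x y, e x y = (x != y) && ((x \in K) || (y \in K)).

(* vertices of the star: None is the center, Some s is the leaf s in S = ~: K *)
Definition star_vertex (T : finType) (K : {set T}) : finType :=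
  option {x : T | x \notin K}.

Definition star_edge (T : finType) (K : {set T}) : rel (star_vertex K) :=
  fun x y => match x, y with
             | None, Some _ | Some _, None => true
             | _, _ => false
             end.

Definition star_color (T : finType) (K : {set T}) (col : T -> color) (c : color)
  : star_vertex K -> color :=
  fun x => match x with None => c | Some s => col (val s) end.

Definition star_game (T : finType) (K : {set T}) (col : T -> color) (c : color) : Game :=
  dom_game (@star_edge T K) (star_color col c).

From mathcomp Require Import all_boot.
Set Implicit Arguments. Unset Strict Implicit. Unset Printing Implicit Defensive.

(* Send every clique vertex to the center of the star and every vertex of S
   to its own leaf.  In a complete split graph a clique vertex dominates the
   whole graph, exactly as the center does, so this map preserves domination;
   hence the images of the selected sets relate the two domination games by a
   bisimulation, and bisimilar terminating games have the same value.  A player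
   may select the center iff they may select some clique vertex, which is what
   determines the color of the center. *)

Section Bisimulation.
Variables G H : Game.

Definition transfers (A B : Type) (mA : A -> A -> Prop) (mB : B -> B -> Prop)
    (R : A -> B -> Prop) :=
  forall p q p', R p q -> mA p p' -> exists2 q', mB q q' & R p' q'.

Definition game_bisimulation (R : gpos G -> gpos H -> Prop) :=
  [/\ transfers (@lmove G) (@lmove H) R,
      transfers (@lmove H) (@lmove G) (fun q p => R p q),
      transfers (@rmove G) (@rmove H) R
    & transfers (@rmove H) (@rmove G) (fun q p => R p q)].

Lemma game_eq_of_bisimulation (m : gpos G -> nat) (R : gpos G -> gpos H -> Prop) :
    (forall p p', lmove p p' -> m p' < m p) ->
    (forall p p', rmove p p' -> m p' < m p) ->
    game_bisimulation R -> R (gstart G) (gstart H) -> game_eq G H.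
Proof.
move=> ldec rdec [lGH lHG rGH rHG] Rstart.
pose GH := game_sum G (game_neg H).
suff second_win n p q : m p < n -> R p q ->
    @LLose GH (p, q) /\ @RLose GH (p, q).
  exact: second_win (ltnSn _) Rstart.
elim: n p q => [//|n IHn] p q mp Rpq; split; constructor=> -[p' q'] /=.
- case=> [[mv ->] | [-> mv]].
  + have [q'' mv' Rq] := lGH _ _ _ Rpq mv.
    apply: (@RWin_intro GH _ (p', q'')); first by right.
    exact: (IHn _ _ (leq_trans (ldec _ _ mv) mp) Rq).1.
  + have [p'' mv' Rp] := rHG _ _ _ Rpq mv.
    apply: (@RWin_intro GH _ (p'', q')); first by left.
    exact: (IHn _ _ (leq_trans (rdec _ _ mv') mp) Rp).1.
- case=> [[mv ->] | [-> mv]].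
  + have [q'' mv' Rq] := rGH _ _ _ Rpq mv.
    apply: (@LWin_intro GH _ (p', q'')); first by right.
    exact: (IHn _ _ (leq_trans (rdec _ _ mv) mp) Rq).2.
  + have [p'' mv' Rp] := lHG _ _ _ Rpq mv.
    apply: (@LWin_intro GH _ (p'', q')); first by left.
    exact: (IHn _ _ (leq_trans (ldec _ _ mv') mp) Rp).2.
Qed.

End Bisimulation.

(* [lmove (dom_game e col)] and [rmove (dom_game e col)] unfold to
   [dom_move e col alice_can] and [dom_move e col bob_can]. *)
Definition dom_move (T : finType) (e : rel T) (col : T -> color)
    (can : color -> bool) (S S' : {set T}) :=
  exists v, [/\ can (col v), playable e S v & S' = v |: S].

Lemma playable_notin (T : finType) (e : rel T) (S : {set T}) v :
  playable e S v -> v \notin S.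
Proof.
case/existsP=> w /andP[dom_vw]; apply: contra => vS.
by apply/existsP; exists v; rewrite vS dom_vw.
Qed.

Lemma dom_move_card (T : finType) (e : rel T) col can (S S' : {set T}) :
  dom_move e col can S S' -> #|~: S'| < #|~: S|.
Proof.
case=> v [_ /playable_notin vS ->].
by apply: proper_card; rewrite properC properUr // sub1set.
Qed.

Lemma existsb_imset (A B : finType) (f : A -> B) (S : {set A}) (P : pred B) :
  [exists u in f @: S, P u] = [exists u in S, P (f u)].
Proof.
apply/existsP/existsP => [[_ /andP[/imsetP[x Sx ->] Pfx]] | [x /andP[Sx Px]]].
  by exists x; rewrite Sx.
by exists (f x); rewrite imset_f.
Qed.

Section DominationQuotient.
Variables (T U : finType) (e : rel T) (e' : rel U).
Variables (col : T -> color) (col' : U -> color) (f : T -> U).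
Hypothesis f_surj : forall y, exists v, f v = y.
Hypothesis dominates_f : forall u w, dominates e' (f u) (f w) = dominates e u w.

Definition fiber_can (can : color -> bool) :=
  forall y, can (col' y) = [exists v, (f v == y) && can (col v)].

Lemma playable_imset (S : {set T}) v :
  playable e' (f @: S) (f v) = playable e S v.
Proof.
have dom_undom w : dominates e' (f v) (f w) && ~~ [exists u in f @: S, dominates e' u (f w)]
    = dominates e v w && ~~ [exists u in S, dominates e u w].
  rewrite existsb_imset dominates_f; congr (_ && ~~ _).
  by apply: eq_existsb => u; rewrite dominates_f.
apply/existsP/existsP => [[y] | [w]]; last by rewrite -dom_undom; exists (f w).
by have [w <-] := f_surj y; rewrite dom_undom; exists w.
Qed.

Lemma dom_move_imset can : fiber_can can ->
  transfers (dom_move e col can) (dom_move e' col' can) (fun S Q => Q = f @: S).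
Proof.
move=> fib S _ _ -> [v [can_v play_v ->]].
exists (f v |: f @: S); last by rewrite imsetU1.
exists (f v); split=> //; last by rewrite playable_imset.
by rewrite fib; apply/existsP; exists v; rewrite eqxx.
Qed.

Lemma dom_move_preimset can : fiber_can can ->
  transfers (dom_move e' col' can) (dom_move e col can) (fun Q S => Q = f @: S).
Proof.
move=> fib Q S _ -> [y [+ + ->]]; rewrite fib => /existsP[v /andP[/eqP <- can_v]].
move=> play_v; exists (v |: S); last by rewrite imsetU1.
by exists v; rewrite -playable_imset.
Qed.

Lemma dom_game_eq_quotient : fiber_can alice_can -> fiber_can bob_can ->
  game_eq (dom_game e col) (dom_game e' col').
Proof.
move=> fibA fibB.
apply: (@game_eq_of_bisimulation (dom_game e col) (dom_game e' col')
  (fun S => #|~: S|) (fun S Q => Q = f @: S)).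
- exact: dom_move_card.
- exact: dom_move_card.
- split; [exact: dom_move_imset | exact: dom_move_preimset
         | exact: dom_move_imset | exact: dom_move_preimset].
- by rewrite /= imset0.
Qed.

End DominationQuotient.

Section SplitToStar.
Variables (T : finType) (e : rel T) (K : {set T}) (col : T -> color) (c : color).
Hypothesis split_e : complete_split e K.
Hypothesis K_neq0 : K != set0.

Let to_star (x : T) : star_vertex K := insub x.

Lemma to_star_surj y : exists x, to_star x = y.
Proof.
case: y => [s|]; first by exists (val s); rewrite /to_star valK.
by case/set0Pn: K_neq0 => k kK; exists k; rewrite /to_star insubF ?kK.
Qed.

Lemma dominates_to_star u w :
  dominates (@star_edge T K) (to_star u) (to_star w) = dominates e u w.
Proof.
rewrite /dominates split_e /to_star.
case: insubP => [a /negbTE uK au|/negPn uK]; case: insubP => [b /negbTE wK bw|/negPn wK] /=;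
  rewrite ?uK ?wK ?orbT ?andbT ?orbN //.
by rewrite -au -bw (inj_eq val_inj) !orbF andbF orbF.
Qed.

Lemma fiber_can_star (can : color -> bool) :
  can c = [exists v in K, can (col v)] ->
  fiber_can col (star_color col c) to_star can.
Proof.
move=> can_c [s|] /=.
  apply/idP/existsP => [can_s | [v]]; first by exists (val s); rewrite /to_star valK eqxx.
  by rewrite /to_star; case: insubP => // s' _ <- /andP[/eqP[->]].
rewrite can_c; apply: eq_existsb => v.
by rewrite /to_star; case: insubP => [? /negbTE -> _ | /negPn ->].
Qed.

Lemma complete_split_game_eq_star :
  alice_can c = [exists v in K, alice_can (col v)] ->
  bob_can c = [exists v in K, bob_can (col v)] ->
  game_eq (dom_game e col) (star_game K col c).
Proof.
move=> canA canB; apply: (dom_game_eq_quotient to_star_surj dominates_to_star);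
  exact: fiber_can_star.
Qed.

End SplitToStar.

Lemma existsb_can_const (T : finType) (K : {set T}) (col : T -> color) c can :
  K != set0 -> (forall v, v \in K -> col v = c) ->
  can c = [exists v in K, can (col v)].
Proof.
case/set0Pn=> k kK all_c; apply/idP/existsP => [can_c | [v /andP[vK]]].
  by exists k; rewrite kK all_c.
by rewrite all_c.
Qed.

Lemma existsb_can_not_const (T : finType) (K : {set T}) (col : T -> color) c can :
  (forall x, ~~ can x -> x = c) -> ~ (forall v, v \in K -> col v = c) ->
  [exists v in K, can (col v)].
Proof.
move=> cannot_c not_all; apply: contra_notT not_all => /existsPn no_can v vK.
by apply: cannot_c; move: (no_can v); rewrite vK.
Qed.

Theorem theorem10 (T : finType) (e : rel T) (K : {set T}) (col : T -> color) :
  complete_split e K -> K != set0 ->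
  [/\ (forall v, v \in K -> col v = cA) -> game_eq (dom_game e col) (star_game K col cA),
      (forall v, v \in K -> col v = cB) -> game_eq (dom_game e col) (star_game K col cB)
    & ~ (forall v, v \in K -> col v = cA) -> ~ (forall v, v \in K -> col v = cB) ->
      game_eq (dom_game e col) (star_game K col cC)].
Proof.
move=> split_e K_neq0; split=> [allA | allB | not_allA not_allB];
  apply: complete_split_game_eq_star => //; try exact: existsb_can_const.
- by rewrite (existsb_can_not_const (c := cB)) //; case.
- by rewrite (existsb_can_not_const (c := cA)) //; case.
Qed.
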